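(* Let $G$ be a finite simple graph on $n$ vertices. Then there exists a finite simple graph $\widehat{G}$ such that \[ h(G,x)=x^{n}\,I(\widehat{G},1/x). \]
   Context: For a graph $G$ on $n$ vertices, let $a_k(G)$ denote the number of ways to cover all vertices of $G$ by exactly $k$ pairwise disjoint cliques of $G$ (i.e. the number of partitions of $V(G)$ into exactly $k$ parts, each inducing a complete subgraph). The adjoint polynomial of $G$ is $h(G,x)=\sum_{k=1}^n(-1)^{n-k}a_k(G)x^k$. For a graph $H$, the independence polynomial is $I(H,x)=\sum_{k\ge 0}(-1)^k i_k(H)x^k$, where $i_k(H)$ is the number of independent sets of size $k$ in $H$ (so $i_0(H)=1$). *)

From HB Require Import structures.
From mathcomp Require Import all_boot all_order all_algebra.
Set Implicit Arguments. Unset Strict Implicit. Unset Printing Implicit Defensive.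
Import GRing.Theory Num.Theory.
Local Open Scope ring_scope.

Definition simple_graph (T : finType) (e : rel T) : Prop :=
  symmetric e /\ irreflexive e.

Definition is_clique (T : finType) (e : rel T) (A : {set T}) : bool :=
  [forall x in A, forall y in A, (x != y) ==> e x y].

Definition clique_cover_num (T : finType) (e : rel T) (k : nat) : nat :=
  #|[set P : {set {set T}} | [&& partition P [set: T],
                                 [forall A in P, is_clique e A] & #|P| == k]]|.

Definition is_indep (T : finType) (e : rel T) (A : {set T}) : bool :=
  [forall x in A, forall y in A, ~~ e x y].

Definition indep_num (T : finType) (e : rel T) (k : nat) : nat :=
  #|[set A : {set T} | is_indep e A && (#|A| == k)]|.

Definition adjoint_poly (T : finType) (e : rel T) : {poly rat} :=
  \sum_(1 <= k < #|T|.+1)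
     ((-1) ^+ (#|T| - k) * (clique_cover_num e k)%:R) *: 'X^k.

Definition indep_poly (T : finType) (e : rel T) : {poly rat} :=
  \sum_(0 <= k < #|T|.+1) ((-1) ^+ k * (indep_num e k)%:R) *: 'X^k.

(* Fix a linear order on the vertices.  A partition of V(G) into k cliques is the same as
   a "root map" f sending every vertex to the least vertex of its clique, and f is recorded
   by the n - k arcs (f v, v) with f v <> v.  Take as vertices of G-hat the arcs u -> v with
   uv an edge and u < v, two arcs being adjacent when no root map can contain both.  Then the
   arc sets of root maps are exactly the independent sets of G-hat, so a_k(G) = i_(n-k)(G-hat)
   for k <= n, i_j(G-hat) = 0 for j >= n, and reversing coefficients gives
   h(G,x) = x^n I(G-hat,1/x). *)

From HB Require Import structures.
From mathcomp Require Import all_boot all_order all_algebra.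
From mathcomp Require Import zify.
Import GRing.Theory Num.Theory.
Set Implicit Arguments. Unset Strict Implicit. Unset Printing Implicit Defensive.

Lemma is_indepP (V : finType) (r : rel V) (A : {set V}) :
  reflect (forall x y, x \in A -> y \in A -> ~~ r x y) (is_indep r A).
Proof.
apply: (iffP forallP) => [rA x y xA yA | rA x].
  by move/implyP: (rA x) => /(_ xA)/forallP/(_ y)/implyP/(_ yA).
by apply/implyP => xA; apply/forallP => y; apply/implyP; apply: rA.
Qed.

Lemma indep_num_relpre (V W : finType) (h : W -> V) (r : rel V) j :
  bijective h -> indep_num (relpre h r) j = indep_num r j.
Proof.
move=> [g hK gK]; have h_inj := can_inj hK.
rewrite /indep_num -(card_imset _ (imset_inj h_inj)).
apply: eq_card => B; rewrite inE; apply/imsetP/andP => [[A] | [iB cB]].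
  rewrite inE => /andP[iA cA] ->; rewrite card_imset //; split => //.
  by apply/is_indepP => _ _ /imsetP[x xA ->] /imsetP[y yA ->]; move/is_indepP: iA; apply.
exists (g @: B); last by rewrite -imset_comp (eq_imset _ gK) imset_id.
rewrite inE card_imset ?cB ?andbT; last exact: can_inj gK.
apply/is_indepP => _ _ /imsetP[x xB ->] /imsetP[y yB ->] /=.
by rewrite !gK; move/is_indepP: iB; apply.
Qed.

Lemma relabel_ord (V : finType) (r : rel V) : simple_graph r ->
  exists m (r' : rel 'I_m), simple_graph r' /\ indep_num r' =1 indep_num r.
Proof.
move=> [r_sym r_irr]; exists #|V|, (relpre enum_val r); split.
  by split => [x y | x] /=; [apply: r_sym | apply: r_irr].
by move=> j; apply: indep_num_relpre; apply: enum_val_bij.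
Qed.

Lemma indep_num_gt (V : finType) (r : rel V) j : (#|V| < j)%N -> indep_num r j = 0%N.
Proof.
move=> Vj; apply/eqP; rewrite cards_eq0; apply/eqP/setP => A; rewrite !inE.
by apply/negP => /andP[_ /eqP cA]; move: (max_card A); rewrite cA leqNgt Vj.
Qed.

Section CliqueCovers.

Variables (T : finType) (e : rel T) (rk : T -> nat).
Hypothesis rk_inj : injective rk.

Definition root_map (f : {ffun T -> T}) : bool :=
  [&& [forall v, f (f v) == f v], [forall v, rk (f v) <= rk v] &
      [forall v, forall w, (v != w) && (f v == f w) ==> e v w]].

Lemma root_mapP (f : {ffun T -> T}) :
  reflect [/\ forall v, f (f v) = f v, forall v, rk (f v) <= rk v &
              forall v w, v != w -> f v = f w -> e v w] (root_map f).
Proof.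
apply: (iffP and3P) => [[/forallP f_idem /forallP f_rk /forallP f_adj] | [f_idem f_rk f_adj]].
  split=> [v | // | v w vw fvw]; first exact/eqP.
  by move/forallP/(_ w)/implyP: (f_adj v); apply; rewrite vw fvw eqxx.
split; apply/forallP => v; first by rewrite f_idem.
  exact: f_rk.
by apply/forallP => w; apply/implyP => /andP[vw /eqP]; apply: f_adj.
Qed.

Section RootMap.

Variable f : {ffun T -> T}.
Hypothesis f_root : root_map f.

Lemma root_map_idem v : f (f v) = f v.
Proof. by case/root_mapP: f_root. Qed.

Lemma root_map_rk v : rk (f v) <= rk v.
Proof. by case/root_mapP: f_root. Qed.

Lemma root_map_adj v w : v != w -> f v = f w -> e v w.
Proof. by case/root_mapP: f_root => _ _; apply. Qed.

Lemma root_map_rk_lt v : f v != v -> rk (f v) < rk v.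
Proof.
by move=> fv; rewrite ltn_neqAle root_map_rk andbT (inj_eq rk_inj).
Qed.

Lemma root_map_edge v : f v != v -> e (f v) v.
Proof. by move=> fv; apply: root_map_adj fv _; rewrite root_map_idem. Qed.

End RootMap.

Definition clique_partition (P : {set {set T}}) : bool :=
  partition P [set: T] && [forall A in P, is_clique e A].

Lemma eq_rk_min (A : {pred T}) x y : x \in A -> y \in A ->
  (forall z, z \in A -> rk x <= rk z) -> (forall z, z \in A -> rk y <= rk z) -> x = y.
Proof.
by move=> xA yA x_min y_min; apply: rk_inj; apply/eqP; rewrite eqn_leq x_min ?y_min.
Qed.

Definition root_partition (f : {ffun T -> T}) := preim_partition f [set: T].

Lemma mem_pblock_root_partition f v w :
  (w \in pblock (root_partition f) v) = (f v == f w).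
Proof.
have f_equiv : {in [set: T] & &, equivalence_rel (fun x y => f x == f y)}.
  by move=> x y z _ _ _; split=> // /eqP->.
exact: (pblock_equivalence_partition f_equiv (in_setT v) (in_setT w)).
Qed.

Lemma root_partition_clique f : root_map f -> clique_partition (root_partition f).
Proof.
move=> f_root; rewrite /clique_partition preim_partitionP /=.
apply/forallP => A; apply/implyP => /imsetP[x _ ->].
apply/forallP => y; apply/implyP; rewrite inE => /andP[_ /eqP fy].
apply/forallP => z; apply/implyP; rewrite inE => /andP[_ /eqP fz].
by apply/implyP => yz; apply: (root_map_adj f_root yz); rewrite -fy -fz.
Qed.

Lemma card_root_partition f : root_map f -> #|root_partition f| = #|f @: [set: T]|.
Proof.
move=> f_root; rewrite /root_partition /preim_partition /equivalence_partition.
rewrite -[in RHS](card_in_imset (f := fun r => [set y in [set: T] | r == f y])).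
  by rewrite -imset_comp.
move=> _ _ /imsetP[x _ ->] /imsetP[y _ ->] /setP/(_ (f x)).
by rewrite !inE root_map_idem // eqxx => /esym/eqP.
Qed.

Definition partition_root (P : {set {set T}}) : {ffun T -> T} :=
  [ffun v => arg_min v (fun x => x \in pblock P v) rk].

Section PartitionRoot.

Variable P : {set {set T}}.
Hypothesis P_clique : clique_partition P.

Let P_part : partition P [set: T]. Proof. by case/andP: P_clique. Qed.

Let mem_pblock_self v : v \in pblock P v.
Proof. by rewrite mem_pblock (cover_partition P_part) inE. Qed.

Lemma partition_root_min v : partition_root P v \in pblock P v /\
  forall y, y \in pblock P v -> rk (partition_root P v) <= rk y.
Proof. by rewrite ffunE; case: arg_minnP => // x. Qed.

Lemma pblock_partition_root v : pblock P (partition_root P v) = pblock P v.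
Proof.
by apply: same_pblock (partition_trivIset P_part) _; case: (partition_root_min v).
Qed.

Lemma eq_partition_root x y :
  (partition_root P x == partition_root P y) = (pblock P x == pblock P y).
Proof.
apply/eqP/eqP => [rxy | Pxy].
  by rewrite -pblock_partition_root rxy pblock_partition_root.
have [rx_in rx_min] := partition_root_min x; have [ry_in ry_min] := partition_root_min y.
by rewrite Pxy in rx_in rx_min; apply: (eq_rk_min rx_in ry_in).
Qed.

Lemma partition_root_root : root_map (partition_root P).
Proof.
apply/root_mapP; split=> [v | v | v w vw].
- by apply/eqP; rewrite eq_partition_root pblock_partition_root.
- by case: (partition_root_min v) => _; apply.
move/eqP; rewrite eq_partition_root => /eqP Pvw.
have Pv : pblock P v \in P by rewrite pblock_mem // (cover_partition P_part) inE.
case/andP: P_clique => _ /forallP/(_ _)/implyP/(_ Pv)/forallP/(_ v)/implyP.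
move/(_ (mem_pblock_self v))/forallP/(_ w)/implyP; rewrite Pvw.
by move/(_ (mem_pblock_self w))/implyP/(_ vw).
Qed.

Lemma partition_rootK : root_partition (partition_root P) = P.
Proof.
rewrite -[RHS](preim_partition_pblock P_part) /root_partition /preim_partition.
rewrite /equivalence_partition; apply: eq_imset => x; apply/setP => y.
by rewrite !inE eq_partition_root.
Qed.

End PartitionRoot.

Lemma root_partitionK f : root_map f -> partition_root (root_partition f) = f.
Proof.
move=> f_root; apply/ffunP => v; have P_clique := root_partition_clique f_root.
have [rv_in rv_min] := partition_root_min P_clique v.
apply: (@eq_rk_min (pblock (root_partition f) v)) => //.
  by rewrite mem_pblock_root_partition root_map_idem.
by move=> y; rewrite mem_pblock_root_partition => /eqP->; apply: root_map_rk.
Qed.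

Lemma clique_cover_num_root_maps k :
  clique_cover_num e k = #|[set f | root_map f && (#|f @: [set: T]| == k)]|.
Proof.
rewrite /clique_cover_num -(card_in_imset (f := root_partition)) => [|f g]; last first.
  rewrite !inE => /andP[f_root _] /andP[g_root _] /(congr1 partition_root).
  by rewrite !root_partitionK.
apply: eq_card => P; rewrite inE andbA -/(clique_partition P).
apply/andP/imsetP => [[P_clique /eqP cP] | [f + ->]].
  exists (partition_root P); last by rewrite partition_rootK.
  rewrite inE partition_root_root //= -card_root_partition ?partition_root_root //.
  by rewrite partition_rootK // cP.
rewrite inE => /andP[f_root /eqP cf].
by rewrite root_partition_clique // card_root_partition // cf.
Qed.


Hypothesis e_sym : symmetric e.

Local Notation arc := {p : T * T | e p.1 p.2 && (rk p.1 < rk p.2)}.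
Local Notation src a := (val a).1.
Local Notation tgt a := (val a).2.

Lemma arc_edge (a : arc) : e (src a) (tgt a).
Proof. by case/andP: (valP a). Qed.

Lemma arc_rk_lt (a : arc) : rk (src a) < rk (tgt a).
Proof. by case/andP: (valP a). Qed.

Lemma arc_neq (a : arc) : src a != tgt a.
Proof. by apply: contraTneq (arc_rk_lt a) => ->; rewrite ltnn. Qed.

Lemma arc_inj (a b : arc) : src a = src b -> tgt a = tgt b -> a = b.
Proof.
by move=> sab tab; apply: val_inj; rewrite [val a]surjective_pairing sab tab -surjective_pairing.
Qed.

(* Two arcs conflict when they give a vertex two roots, make a root a non-root, or give one
   root two non-adjacent children. *)
Definition conflict : rel arc := fun a b =>
  (a != b) && [|| tgt a == tgt b, tgt a == src b, src a == tgt b |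
                  (src a == src b) && ~~ e (tgt a) (tgt b)].

Lemma conflict_simple : simple_graph conflict.
Proof.
split=> [a b | a]; last by rewrite /conflict eqxx.
rewrite /conflict eq_sym (eq_sym (tgt a) (tgt b)) (eq_sym (tgt a) (src b)).
rewrite (eq_sym (src a) (tgt b)) (eq_sym (src a) (src b)) e_sym; congr (_ && _).
by case: (src b == tgt a); case: (tgt b == src a); rewrite ?orbT.
Qed.

Definition root_arcs (f : {ffun T -> T}) : {set arc} := [set a | f (tgt a) == src a].

Lemma root_arc f v : root_map f -> f v != v -> exists2 a : arc, src a = f v & tgt a = v.
Proof.
move=> f_root fv; have fv_arc : e (f v) v && (rk (f v) < rk v).
  by rewrite root_map_edge ?root_map_rk_lt.
by exists (Sub (f v, v) fv_arc).
Qed.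

Lemma root_arcs_indep f : root_map f -> is_indep conflict (root_arcs f).
Proof.
move=> f_root; apply/is_indepP => a b; rewrite !inE => /eqP fa /eqP fb.
apply/negP => /andP[ab]; case/or4P => [/eqP tab | /eqP tasb | /eqP satb | /andP[/eqP sab]].
- by move/eqP: ab; apply; apply: arc_inj; rewrite // -fa -fb tab.
- by move: (arc_neq a); rewrite -fa tasb -fb root_map_idem // fb eqxx.
- by move: (arc_neq b); rewrite -fb -satb -fa root_map_idem // fa eqxx.
have tab : tgt a != tgt b by apply: contra ab => /eqP tab; apply/eqP/arc_inj.
by rewrite (root_map_adj f_root tab) // fa fb sab.
Qed.

Lemma card_root_arcs f : root_map f -> #|root_arcs f| + #|f @: [set: T]| = #|T|.
Proof.
move=> f_root.
have fixed : f @: [set: T] = ~: [set v | f v != v].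
  apply/setP => v; rewrite !inE negbK; apply/imsetP/eqP => [[w _ ->] | <-].
    exact: root_map_idem.
  by exists v.
have moved : [seq tgt a | a in root_arcs f] =i [set v | f v != v].
  move=> v; rewrite inE; apply/imageP/idP => [[a] | fv].
    by rewrite inE => /eqP fa ->; rewrite fa arc_neq.
  by have [a sa ta] := root_arc f_root fv; exists a; rewrite // inE ta sa.
rewrite fixed -(cardsC [set v | f v != v]) -(eq_card moved) card_in_image // => a b.
by rewrite !inE => /eqP fa /eqP fb tab; apply: arc_inj; rewrite // -fa -fb tab.
Qed.

Definition arcs_root (S : {set arc}) : {ffun T -> T} :=
  [ffun v => if [pick a in S | tgt a == v] is Some a then src a else v].

Variant arcs_root_spec (S : {set arc}) (v : T) : T -> Prop :=
  | ArcsRootArc a of a \in S & tgt a = v : arcs_root_spec S v (src a)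
  | ArcsRootFixed of (forall a, a \in S -> tgt a != v) : arcs_root_spec S v v.

Lemma arcs_rootP S v : arcs_root_spec S v (arcs_root S v).
Proof.
rewrite ffunE; case: pickP => [a /andP[aS /eqP ta] | noa]; first exact: ArcsRootArc.
by apply: ArcsRootFixed => a aS; move: (noa a); rewrite aS /= => ->.
Qed.

Section IndependentArcs.

Variable S : {set arc}.
Hypothesis S_indep : is_indep conflict S.

Let S_conflictN a b : a \in S -> b \in S -> ~~ conflict a b.
Proof. by move/is_indepP: S_indep; apply. Qed.

Lemma arcs_root_tgt a : a \in S -> arcs_root S (tgt a) = src a.
Proof.
move=> aS; case: arcs_rootP => [b bS tba | /(_ a aS)]; last by rewrite eqxx.
case: (eqVneq b a) => [-> // | ba].
by have := S_conflictN bS aS; rewrite /conflict ba tba eqxx.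
Qed.

Lemma arcs_root_root : root_map (arcs_root S).
Proof.
apply/root_mapP; split=> [v | v | v w].
- case: (arcs_rootP S v) => [a aS _ | noarc]; last first.
    by case: arcs_rootP => // a aS tav; move: (noarc a aS); rewrite tav eqxx.
  case: arcs_rootP => // b bS tbsa.
  have ab : a != b by apply/eqP => ab; move: (arc_neq b); rewrite tbsa -ab eqxx.
  by have := S_conflictN aS bS; rewrite /conflict ab tbsa eqxx !orbT.
- by case: arcs_rootP => // a _ <-; apply: ltnW (arc_rk_lt a).
case: (arcs_rootP S v) => [a aS <- | _]; case: (arcs_rootP S w) => [b bS <- | _].
- move=> tab sab; have ab : a != b by apply: contra tab => /eqP->.
  have := S_conflictN aS bS; rewrite /conflict ab sab eqxx (negPf tab) /=.
  by move=> /norP[_ /norP[_ /negbNE]].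
- by move=> _ <-; rewrite e_sym arc_edge.
- by move=> _ ->; apply: arc_edge.
- by move/eqP.
Qed.

Lemma root_arcs_root : root_arcs (arcs_root S) = S.
Proof.
apply/setP => a; rewrite inE; apply/eqP/idP => [|aS]; last exact: arcs_root_tgt.
case: arcs_rootP => [b bS tba sba | _ tsa]; first by rewrite (@arc_inj a b).
by move: (arc_neq a); rewrite tsa eqxx.
Qed.

Lemma card_indep_conflict : #|S| + #|arcs_root S @: [set: T]| = #|T|.
Proof. by rewrite -{1}root_arcs_root card_root_arcs // arcs_root_root. Qed.

End IndependentArcs.

Lemma arcs_rootK f : root_map f -> arcs_root (root_arcs f) = f.
Proof.
move=> f_root; apply/ffunP => v; case: arcs_rootP => [a | noarc].
  by rewrite inE => /eqP fa <-.
case: (eqVneq (f v) v) => [-> // | fv]; have [a sa ta] := root_arc f_root fv.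
by move: (noarc a); rewrite inE ta sa !eqxx => /(_ isT).
Qed.

Lemma indep_num_conflict k : k <= #|T| ->
  indep_num conflict (#|T| - k) = clique_cover_num e k.
Proof.
move=> kT; rewrite clique_cover_num_root_maps -(card_in_imset (f := root_arcs)); last first.
  move=> f g; rewrite !inE => /andP[f_root _] /andP[g_root _] /(congr1 arcs_root).
  by rewrite !arcs_rootK.
apply: eq_card => S; rewrite inE; apply/andP/imsetP => [[S_indep /eqP cS] | [f + ->]].
  exists (arcs_root S); last by rewrite root_arcs_root.
  rewrite inE arcs_root_root //=; have := card_indep_conflict S_indep.
  by rewrite cS => ?; apply/eqP; lia.
rewrite inE => /andP[f_root /eqP cf]; split; first exact: root_arcs_indep.
by have := card_root_arcs f_root; rewrite cf => <-; rewrite addnK.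
Qed.

Lemma indep_num_conflict_ge j : 0 < #|T| -> #|T| <= j -> indep_num conflict j = 0.
Proof.
move=> /card_gt0P[v _] Tj; apply/eqP; rewrite cards_eq0; apply/eqP/setP => S; rewrite !inE.
apply/negP => /andP[S_indep /eqP cS]; have := card_indep_conflict S_indep.
have : 0 < #|arcs_root S @: [set: T]|.
  by apply/card_gt0P; exists (arcs_root S v); apply: imset_f.
by rewrite cS; lia.
Qed.
End CliqueCovers.

Local Open Scope ring_scope.

Lemma big_nat_tail0 (R : nmodType) (F : nat -> R) n1 n2 : (n1 <= n2)%N ->
  (forall j, (n1 <= j)%N -> F j = 0) -> \sum_(0 <= j < n2) F j = \sum_(0 <= j < n1) F j.
Proof.
move=> n12 F0; rewrite (big_cat_nat (leq0n n1) n12) /= [X in _ + X]big1_seq ?addr0 //.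
by move=> j /andP[_]; rewrite mem_index_iota => /andP[/F0].
Qed.

Lemma horner_indep_poly (V : finType) (r : rel V) (y : rat) N :
  (forall j, (N <= j)%N -> indep_num r j = 0%N) ->
  (indep_poly r).[y] = \sum_(0 <= j < N) (-1) ^+ j * (indep_num r j)%:R * y ^+ j.
Proof.
move=> rN; rewrite /indep_poly horner_sum.
under eq_bigr do rewrite hornerZ hornerXn.
have r0 j : (N <= j)%N || (#|V| < j)%N -> (-1) ^+ j * (indep_num r j)%:R * y ^+ j = 0.
  by case/orP => [/rN | /indep_num_gt] ->; rewrite mulr0 mul0r.
rewrite -(@big_nat_tail0 _ _ _ (N + #|V|.+1)) ?leq_addl // => [|j Vj].
  by rewrite (@big_nat_tail0 _ _ N) ?leq_addr // => j Nj; rewrite r0 ?Nj.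
by rewrite r0 ?Vj ?orbT.
Qed.

Lemma horner_adjoint_poly (T : finType) (e : rel T) (x : rat) :
  (adjoint_poly e).[x] =
    \sum_(1 <= k < #|T|.+1) (-1) ^+ (#|T| - k) * (clique_cover_num e k)%:R * x ^+ k.
Proof.
by rewrite /adjoint_poly horner_sum; apply: eq_bigr => k _; rewrite hornerZ hornerXn.
Qed.

Lemma mul_expr_sum_rev (R : fieldType) n (c : nat -> R) (x : R) : x != 0 ->
  x ^+ n * \sum_(0 <= j < n) c j * x^-1 ^+ j = \sum_(1 <= k < n.+1) c (n - k)%N * x ^+ k.
Proof.
move=> x0; rewrite big_add1 mulr_sumr (big_nat_rev _ 0) /=.
apply: eq_big_nat => k /andP[_ kn]; rewrite add0n -{1}(subnK kn) exprD exprVn.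
by rewrite mulrAC mulrCA mulfV ?expf_neq0 // mulr1.
Qed.

Theorem theorem1 (T : finType) (e : rel T) :
  simple_graph e -> (0 < #|T|)%N ->
  exists (m : nat) (e' : rel 'I_m),
    simple_graph e' /\
    forall x : rat, x != 0 ->
      (adjoint_poly e).[x] = x ^+ #|T| * (indep_poly e').[x^-1].
Proof.
move=> [e_sym _] T_gt0.
pose rk (v : T) : nat := enum_rank v.
have rk_inj : injective rk by move=> v w /val_inj/enum_rank_inj.
have [m [e' [e'_simple e'_indep]]] := relabel_ord (conflict_simple rk e_sym).
exists m, e'; split=> // x x0.
rewrite horner_adjoint_poly (@horner_indep_poly _ _ _ #|T|) => [|j Tj]; last first.
  by rewrite e'_indep (indep_num_conflict_ge rk_inj).
rewrite (mul_expr_sum_rev _ (fun j => (-1) ^+ j * (indep_num e' j)%:R)) //.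
by apply: eq_big_nat => k /andP[_ kT]; rewrite e'_indep (indep_num_conflict rk_inj).
Qed.
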